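(* Let $n\ge 2$ be an integer, let $Z$ be a finite set and let $T_1,T_2$ be rooted $Z$-trees with $\mathrm{Seq}(T_1)=\mathrm{Seq}(T_2)$. Let $Q_1,\dots,Q_k$ and $R_1,\dots,R_m$ be as defined in the context, and suppose $|Q_j|<|Z|/\log n$ and $|R_l|<|Z|/\log n$ for all $1\le j\le k$, $1\le l\le m$. Then there is a set $A\subseteq Z$ with $|A|\ge\log n$ such that the unrooted trees obtained from $T_1|A$ and $T_2|A$ by suppressing the root are identical, and they are caterpillars.
   Context: A rooted $Z$-tree is a binary rooted tree with a root of degree two, all other internal nodes of degree three, leaves bijectively labeled by $Z$, and each internal node having a designated left child and right child. For a node $v$, $T_v$ is the subtree rooted at $v$; $\mathrm{Le}(\cdot)$ is the leaf set; the size $|T|$ of a tree is its number of leaves. For $A\subseteq Z$, $T|A$ is the rooted tree obtained from the minimal subtree spanning $A$, rooted at the least common ancestor of $A$, by suppressing non-root degree-two nodes. $\mathrm{Seq}(T)$ is the left-to-right leaf ordering given by pre-order traversal (left child before right child). Let $P_1=(u_1,\dots,u_k)$ be the path in $T_1$ from its left-most leaf $u_1$ to its root $u_k$; $Q_1:=$ the one-leaf tree $u_1$ and for $2\le j\le k$, $Q_j:=(T_1)_c$ with $c$ the child of $u_j$ other than $u_{j-1}$. Let $P_2=(w_1,\dots,w_m)$ be the path in $T_2$ from its root $w_1$ to its right-most leaf $w_m$; $R_m:=$ the one-leaf tree $w_m$ and for $1\le l<m$, $R_l:=(T_2)_c$ with $c$ the child of $w_l$ other than $w_{l+1}$. Unrooted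 trees are identical if there is a label-preserving graph isomorphism; a tree is a caterpillar if every internal node is adjacent to at least one leaf. $\log=\log_2$. *)

From mathcomp Require Import all_boot.
From Stdlib Require Import Reals.
Set Implicit Arguments. Unset Strict Implicit. Unset Printing Implicit Defensive.

Inductive btree (T : Type) : Type :=
| BLeaf of T
| BNode of btree T & btree T.
Arguments BLeaf {T}.
Arguments BNode {T}.

Section Trees.
Variable Z : finType.

Fixpoint leaves (t : btree Z) : seq Z :=
  match t with BLeaf x => [:: x] | BNode l r => leaves l ++ leaves r end.

Definition nleaves (t : btree Z) : nat := size (leaves t).

Definition is_Ztree (t : btree Z) : bool :=
  uniq (leaves t) && [forall z : Z, z \in leaves t].

(* T|A: restriction to A (None iff A misses all leaves); nodes left with a
   single child are suppressed, and the result is rooted at the lca of A. *)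
Fixpoint restrict (A : {set Z}) (t : btree Z) : option (btree Z) :=
  match t with
  | BLeaf x => if x \in A then Some (BLeaf x) else None
  | BNode l r =>
      match restrict A l, restrict A r with
      | Some a, Some b => Some (BNode a b)
      | Some a, None => Some a
      | None, Some b => Some b
      | None, None => None
      end
  end.

(* Q_1,...,Q_k : the subtrees hanging off the path from the left-most leaf to
   the root (Q_1 = the left-most leaf, Q_j = the right subtree at u_j). *)
Fixpoint left_hangs (t : btree Z) : seq (btree Z) :=
  match t with BLeaf x => [:: BLeaf x] | BNode l r => r :: left_hangs l end.

(* R_1,...,R_m : the subtrees hanging off the path from the root to the
   right-most leaf (R_m = the right-most leaf, R_l = left subtree at w_l). *)
Fixpoint right_hangs (t : btree Z) : seq (btree Z) :=
  match t with BLeaf x => [:: BLeaf x] | BNode l r => l :: right_hangs r end.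

(* Nodes of a tree, as addresses = paths from the root (false = left). *)
Fixpoint addrs (t : btree Z) : seq (seq bool) :=
  match t with
  | BLeaf _ => [:: [::]]
  | BNode l r => [::] :: (map (cons false) (addrs l) ++ map (cons true) (addrs r))
  end.

Fixpoint label (t : btree Z) (p : seq bool) : option Z :=
  match t, p with
  | BLeaf x, [::] => Some x
  | BNode l _, false :: p' => label l p'
  | BNode _ r, true :: p' => label r p'
  | _, _ => None
  end.

Definition is_node (t : btree Z) : bool := if t is BNode _ _ then true else false.

(* Unrooted tree obtained by suppressing the (degree-two) root:
   vertices = all nodes except the root; edges = parent-child edges not
   incident to the root, plus an edge joining the two children of the root. *)
Definition uverts (t : btree Z) : seq (seq bool) :=
  if is_node t then [seq p <- addrs t | p != [::]] else addrs t.

Definition uadj (t : btree Z) (p q : seq bool) : bool :=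
  [&& p \in uverts t, q \in uverts t &
   [|| q == rcons p false, q == rcons p true,
       p == rcons q false, p == rcons q true,
       is_node t && (p == [:: false]) && (q == [:: true]) |
       is_node t && (p == [:: true]) && (q == [:: false])]].

(* Identical unrooted trees: a label-preserving graph isomorphism. *)
Definition uiso (t1 t2 : btree Z) : Prop :=
  exists f : seq bool -> seq bool,
    [/\ {in uverts t1 &, injective f},
        perm_eq (map f (uverts t1)) (uverts t2),
        {in uverts t1 &, forall p q, uadj t2 (f p) (f q) = uadj t1 p q} &
        {in uverts t1, forall p, label t2 (f p) = label t1 p}].

Definition caterpillar (t : btree Z) : Prop :=
  forall p, p \in uverts t -> label t p = None ->
    exists2 q, uadj t p q & label t q != None.

End Trees.

Definition log2 (x : R) : R := Rdiv (ln x) (ln 2).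

From mathcomp Require Import all_boot.
From Stdlib Require Import Reals Lra.
Set Implicit Arguments. Unset Strict Implicit. Unset Printing Implicit Defensive.

(* The leaf sequence of T1 is cut into consecutive blocks in two ways: by the
   hanging subtrees Q_k, ..., Q_1 of T1 and by the hanging subtrees R_1, ..., R_m
   of T2.  A greedy scan picks the first unused leaf and then skips the longer
   of the two blocks containing it; every pick costs at most M leaves, where
   M < |Z| / log n bounds all block sizes, so at least log n leaves are picked.
   The resulting set A meets every Q_j and every R_l at most once, hence T1|A
   is a comb growing to the left and T2|A a comb growing to the right on the
   same leaf order.  Both are caterpillars, and repeated rotations at the
   suppressed root turn the one into the other. *)

Section PartialTransversal.
Variable T : eqType.
Implicit Types (a b c s : seq T) (B C : seq (seq T)).

Definition meets_at_most_once (pT : predType T) (A : pT) b :=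
  {in A &, forall y z, y \in b -> z \in b -> y = z}.

Definition partial_transversal (pT : predType T) B (A : pT) :=
  {in B, forall b, meets_at_most_once A b}.

Lemma partial_transversal0 B : partial_transversal B [::].
Proof. by move=> b _ y z; rewrite in_nil. Qed.

Lemma meets_at_most_once_cons x a b :
  meets_at_most_once a b -> (x \in b -> {in a, forall y, y \notin b}) ->
  meets_at_most_once (x :: a) b.
Proof.
move=> meet_ab xb y z; rewrite !in_cons.
case/predU1P=> [->|ya] /predU1P[->|za] yb zb //.
- by have := xb yb z za; rewrite zb.
- by have := xb zb y ya; rewrite yb.
- exact: meet_ab.
Qed.

Lemma notin_uniq_catl a b x : uniq (a ++ b) -> x \in a -> x \notin b.
Proof.
by rewrite cat_uniq => /and3P[_ /hasPn disj _] xa; apply/negP => /disj; rewrite xa.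
Qed.

Lemma subset_shorter_head a b s1 s2 :
  size a <= size b -> a ++ s1 = b ++ s2 -> {subset a <= b}.
Proof.
move=> le_ab eq_ab; have : take (size a) (a ++ s1) = a by rewrite take_size_cat.
by rewrite eq_ab takel_cat // => <- y /mem_take.
Qed.

Lemma notin_later_block b0 B b x :
  x \in b0 -> b \in B -> uniq (b0 ++ flatten B) -> x \notin b.
Proof.
move=> x_b0 bB /notin_uniq_catl/(_ x_b0); apply: contra => xb.
by apply/flattenP; exists b.
Qed.

Fixpoint drop_blocks n B : seq (seq T) :=
  if B is b :: B' then
    if n < size b then drop n b :: B' else drop_blocks (n - size b) B'
  else [::].

Lemma flatten_drop_blocks n B : flatten (drop_blocks n B) = drop n (flatten B).
Proof. by elim: B n => [|b B IH] n //=; rewrite drop_cat; case: ifP. Qed.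

Lemma size_drop_blocks n B : size (drop_blocks n B) <= size B.
Proof.
by elim: B n => [|b B IH] n //=; case: ifP => //= _; apply/leqW/IH.
Qed.

Lemma drop_blocks_bounded M n B :
  {in B, forall b, size b <= M} -> {in drop_blocks n B, forall d, size d <= M}.
Proof.
elim: B n => [|b B IH] n //= szB; case: ifP => _; last first.
  by apply: IH => d dB; apply: szB; rewrite in_cons dB orbT.
move=> d; rewrite in_cons => /predU1P[->|dB]; last by apply: szB; rewrite in_cons dB orbT.
by rewrite size_drop (leq_trans (leq_subr _ _)) // szB ?mem_head.
Qed.

Lemma partial_transversal_drop_blocks n B a :
  uniq (flatten B) -> {subset a <= drop n (flatten B)} ->
  partial_transversal (drop_blocks n B) a -> partial_transversal B a.
Proof.
elim: B n => [|b0 B IH] n //= uniq_bB; rewrite drop_cat.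
have disj y : y \in b0 -> y \notin flatten B by apply: notin_uniq_catl.
move: (uniq_bB); rewrite cat_uniq => /and3P[_ _ uniq_B].
case: ifP => _ sub_a tD b; rewrite in_cons => /predU1P[->|bB].
- move=> y z ya za yb0 zb0; apply: (tD _ (mem_head _ _)) => //.
  + by have := sub_a y ya; rewrite mem_cat (negPf (disj y yb0)) orbF.
  + by have := sub_a z za; rewrite mem_cat (negPf (disj z zb0)) orbF.
- by apply: tD; rewrite in_cons bB orbT.
- by move=> y z ya _ yb0; have := disj y yb0; rewrite (mem_drop (sub_a y ya)).
- exact: IH uniq_B sub_a tD b bB.
Qed.

Lemma partial_transversal_extend x b1 c1 B C a :
  (x :: b1) ++ flatten B = c1 ++ flatten C -> uniq (c1 ++ flatten C) ->
  {subset x :: b1 <= c1} -> {subset a <= flatten C} ->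
  partial_transversal (drop_blocks (size c1) ((x :: b1) :: B)) a ->
  partial_transversal C a ->
  [/\ x \notin a, partial_transversal ((x :: b1) :: B) (x :: a)
    & partial_transversal (c1 :: C) (x :: a)].
Proof.
move=> eBC uniq_s xb1_c1 sub_a tD tC.
have a_c1 : {in a, forall y, y \notin c1}.
  by move=> y /sub_a yC; apply/negP => /(notin_uniq_catl uniq_s); rewrite yC.
have x_c1 : x \in c1 by apply: xb1_c1; rewrite mem_head.
split; first by apply/negP => /a_c1; rewrite x_c1.
- have tB : partial_transversal ((x :: b1) :: B) a.
    by apply: partial_transversal_drop_blocks tD; rewrite [flatten _]eBC ?drop_size_cat.
  move=> b bB; apply: meets_at_most_once_cons (tB b bB) _ => xb y ya.
  case/predU1P: bB => [->|bB]; first by apply: contra (a_c1 y ya); apply: xb1_c1.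
  by have := notin_later_block (mem_head x b1) bB; rewrite eBC xb => /(_ uniq_s).
- move=> c cC; apply: meets_at_most_once_cons (_ : meets_at_most_once a c) _.
    by case/predU1P: cC => [->|/tC] // y z /a_c1 yc1; rewrite (negPf yc1).
  move=> xc y ya; case/predU1P: cC => [->|cC]; first exact: a_c1.
  by have := notin_later_block x_c1 cC; rewrite xc => /(_ uniq_s).
Qed.

Lemma common_partial_transversal M s B C :
  flatten B = s -> flatten C = s -> uniq s ->
  {in B, forall b, size b <= M} -> {in C, forall c, size c <= M} ->
  exists a, [/\ uniq a, {subset a <= s}, partial_transversal B a,
                partial_transversal C a & size s <= size a * M].
Proof.
have [n] := ubnP (size B + size C); elim: n => // n IH in s B C *.
have nil_case B' C' : s = [::] -> exists a, [/\ uniq a, {subset a <= s},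
    partial_transversal B' a, partial_transversal C' a & size s <= size a * M].
  by move->; exists [::]; split => //; apply: partial_transversal0.
case: B C => [|b1 B] [|c1 C] sizeBC eB eC;
  try by move=> *; apply: nil_case; first [by rewrite -eB | by rewrite -eC].
wlog le_bc : b1 c1 B C sizeBC eB eC / size b1 <= size c1.
  move=> sym; case: (leqP (size b1) (size c1)) => [|/ltnW le_cb]; first exact: sym.
  move=> uniq_s szB szC; rewrite addnC in sizeBC.
  by have [a [? ? ? ? ?]] := sym c1 b1 C B sizeBC eC eB le_cb uniq_s szC szB; exists a.
move=> uniq_s szB szC.
have szC' : {in C, forall c, size c <= M} by move=> c cC; apply/szC/mem_behead.
case: b1 => [|x b1] in le_bc sizeBC eB szB *.
  have szB' : {in B, forall b, size b <= M} by move=> b bB; apply/szB/mem_behead.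
  rewrite /= addSn in sizeBC.
  have [a [ua sub_a tB tC sz]] := IH s B (c1 :: C) sizeBC eB eC uniq_s szB' szC.
  exists a; split=> // b /predU1P[->|/tB //] y z _ _; by rewrite in_nil.
set s' := flatten C; have s_c1 : s = c1 ++ s' by rewrite -eC.
rewrite s_c1 in eB uniq_s.
have xb1_c1 := subset_shorter_head le_bc eB.
set D := drop_blocks (size c1) ((x :: b1) :: B).
have sizeDC : size D + size C < n.
  apply: leq_ltn_trans (leq_add (size_drop_blocks _ _) (leqnn _)) _.
  by move: sizeBC; rewrite /= !addSn addnS.
have eD : flatten D = s' by rewrite flatten_drop_blocks [flatten _]eB drop_size_cat.
have szD : {in D, forall d, size d <= M} by apply: drop_blocks_bounded.
have uniq_s' : uniq s' by move: uniq_s; rewrite cat_uniq => /and3P[].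
have [a [ua sub_a tD tC sz]] := IH s' D C sizeDC eD erefl uniq_s' szD szC'.
have [xa tB' tC'] := partial_transversal_extend eB uniq_s xb1_c1 sub_a tD tC.
exists (x :: a); split=> //; first by rewrite /= xa.
- move=> y; rewrite in_cons s_c1 mem_cat => /predU1P[->|/sub_a ->]; last by rewrite orbT.
  by rewrite xb1_c1 ?mem_head.
- by rewrite s_c1 size_cat mulSn leq_add // szC ?mem_head.
Qed.

End PartialTransversal.

Section UnrootedTrees.
Variable Z : finType.
Implicit Types (t l r a b c : btree Z).

Lemma uiso_refl t : uiso t t.
Proof. by exists (fun p => p); split => //; rewrite map_id. Qed.

Lemma uiso_trans t1 t2 t3 : uiso t1 t2 -> uiso t2 t3 -> uiso t1 t3.
Proof.
move=> [f [f_inj f_perm f_adj f_lab]] [g [g_inj g_perm g_adj g_lab]].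
have f_verts p : p \in uverts t1 -> f p \in uverts t2.
  by move=> p1; rewrite -(perm_mem f_perm) map_f.
exists (g \o f); split.
- by move=> p q p1 q1 /= /g_inj; move/(_ (f_verts _ p1) (f_verts _ q1)); apply: f_inj.
- by rewrite map_comp; apply: perm_trans g_perm; apply: perm_map.
- by move=> p q p1 q1 /=; rewrite g_adj ?f_adj ?f_verts.
- by move=> p p1 /=; rewrite g_lab ?f_lab ?f_verts.
Qed.

Definition uedge (p q : seq bool) : bool :=
  [|| q == rcons p false, q == rcons p true,
      p == rcons q false, p == rcons q true,
      (p == [:: false]) && (q == [:: true]) |
      (p == [:: true]) && (q == [:: false])].

Lemma uverts_node l r :
  uverts (BNode l r) = map (cons false) (addrs l) ++ map (cons true) (addrs r).
Proof.
rewrite /uverts /= filter_cat.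
by congr (_ ++ _); elim: (addrs _) => //= ? ? ->.
Qed.

Lemma uverts_node_neq0 l r p : p \in uverts (BNode l r) -> p != [::].
Proof. by rewrite uverts_node mem_cat => /orP[] /mapP[? _ ->]. Qed.

Lemma uadj_node l r p q :
  uadj (BNode l r) p q = [&& p \in uverts (BNode l r), q \in uverts (BNode l r) & uedge p q].
Proof. by []. Qed.

(* Re-addressing for the rotation ((a, b), c) -> (a, (b, c)): the node above
   a and b becomes the node above b and c; both are the middle vertex of the
   unrooted tree. *)
Definition rotate_addr (p : seq bool) : seq bool :=
  match p with
  | [::] => [::]
  | [:: false] => [:: true]
  | false :: false :: p' => false :: p'
  | false :: true :: p' => true :: false :: p'
  | true :: p' => true :: true :: p'
  end.

Lemma rotate_addr_inj : injective rotate_addr.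
Proof. by move=> [|[] [|[] p]] [|[] [|[] q]] //= [->]. Qed.

Lemma uedge_rotate_addr p q :
  p != [::] -> q != [::] -> uedge (rotate_addr p) (rotate_addr q) = uedge p q.
Proof.
rewrite /uedge; case: p => [|[] [|[] p]]; case: q => [|[] [|[] q]] //= _ _.
all: rewrite ?eqseq_cons /= ?orbF ?andbF ?andbT ?eqxx //.
by rewrite !orbA orbF.
Qed.

Lemma uiso_rotate a b c : uiso (BNode (BNode a b) c) (BNode a (BNode b c)).
Proof.
have rot_perm : perm_eq (map rotate_addr (uverts (BNode (BNode a b) c)))
                        (uverts (BNode a (BNode b c))).
  rewrite !uverts_node /= !map_cat -!map_comp -catA.
  by rewrite -[_ ++ [:: true] :: _]/(_ ++ [:: [:: true]] ++ _) perm_sym perm_catCA.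
exists rotate_addr; split => //.
- by move=> p q _ _; apply: rotate_addr_inj.
- move=> p q p1 q1; rewrite !uadj_node p1 q1 -!(perm_mem rot_perm) !map_f //=.
  by rewrite uedge_rotate_addr // (uverts_node_neq0 p1, uverts_node_neq0 q1).
- by move=> [|[] [|[] p]].
Qed.

Lemma caterpillar_leaf_child t (side : bool) :
  (forall p, p \in addrs t -> label t p = None ->
     rcons p side \in addrs t /\ label t (rcons p side) != None) ->
  caterpillar t.
Proof.
move=> leaf_child p p_verts p_internal.
have p_addr : p \in addrs t.
  by move: p_verts; rewrite /uverts; case: is_node; rewrite // mem_filter => /andP[].
have [q_addr q_leaf] := leaf_child p p_addr p_internal.
exists (rcons p side) => //.
have q_verts : rcons p side \in uverts t.
  by rewrite /uverts; case: is_node; rewrite // mem_filter q_addr andbT; case: (p).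
rewrite /uadj p_verts q_verts.
by case: side {leaf_child q_addr q_leaf q_verts}; rewrite eqxx ?orbT.
Qed.

End UnrootedTrees.

Section Combs.
Variable Z : finType.
Implicit Types (x y : Z).

Definition left_comb x (p : seq Z) : btree Z :=
  foldl (fun t y => BNode t (BLeaf y)) (BLeaf x) p.

Fixpoint right_comb x (p : seq Z) : btree Z :=
  if p is y :: q then BNode (BLeaf x) (right_comb y q) else BLeaf x.

Lemma left_comb_rcons x p y : left_comb x (rcons p y) = BNode (left_comb x p) (BLeaf y).
Proof. by rewrite /left_comb foldl_rcons. Qed.

Lemma uiso_join_combs x p y q :
  uiso (BNode (left_comb x p) (right_comb y q)) (right_comb x (p ++ y :: q)).
Proof.
elim/last_ind: p y q => [|p z IH] y q; first exact: uiso_refl.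
rewrite left_comb_rcons cat_rcons; apply: uiso_trans (uiso_rotate _ _ _) _.
exact: IH z (y :: q).
Qed.

Lemma uiso_left_right_comb x p : uiso (left_comb x p) (right_comb x p).
Proof.
case/lastP: p => [|p y]; first exact: uiso_refl.
by rewrite left_comb_rcons -cats1; apply: uiso_join_combs x p y [::].
Qed.

Lemma caterpillar_left_comb x p : caterpillar (left_comb x p).
Proof.
apply: (caterpillar_leaf_child (side := true)).
elim/last_ind: p => [|p z IH] q /=; first by rewrite mem_seq1 => /eqP ->.
rewrite left_comb_rcons /= in_cons mem_cat => /orP[/eqP -> _|/orP[]].
- by split => //; rewrite in_cons mem_cat mem_seq1 eqxx orbT.
- case/mapP => q' q'_addr -> /(IH q' q'_addr) [child_addr child_leaf].
  by split => //; rewrite /= in_cons mem_cat map_f.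
- by rewrite mem_seq1 => /eqP ->.
Qed.

Lemma caterpillar_right_comb x p : caterpillar (right_comb x p).
Proof.
apply: (caterpillar_leaf_child (side := false)).
elim: p x => [|z p IH] x q /=; first by rewrite mem_seq1 => /eqP ->.
rewrite !in_cons => /orP[/eqP -> _|/orP[/eqP -> //|]].
- by split => //; rewrite !in_cons eqxx orbT.
- case/mapP => q' q'_addr -> /(IH z q' q'_addr) [child_addr child_leaf].
  by split => //; rewrite rcons_cons map_f ?orbT.
Qed.

End Combs.

Section Restriction.
Variables (Z : finType) (A : {set Z}).
Implicit Types (t l r : btree Z).

Lemma restrict_none t : [seq y <- leaves t | y \in A] = [::] -> restrict A t = None.
Proof.
elim: t => [x|l IHl r IHr] /=; first by case: ifP.
rewrite filter_cat => /(congr1 (@nilp _)).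
by rewrite cat_nilp => /andP[/nilP/IHl-> /nilP/IHr->].
Qed.

Lemma restrict_leaf t y :
  [seq y <- leaves t | y \in A] = [:: y] -> restrict A t = Some (BLeaf y).
Proof.
elim: t => [x|l IHl r IHr] /=; first by case: ifP => // _ [->].
rewrite filter_cat; case fl: [seq y <- leaves l | y \in A] => [|w f] /=.
  by move=> /IHr->; rewrite restrict_none.
case=> wy /(congr1 (@nilp _)); rewrite cat_nilp => /andP[/nilP f0 /nilP/restrict_none->].
by rewrite IHl // fl f0 wy.
Qed.

Lemma filter_meets_at_most_once (s : seq Z) :
  uniq s -> meets_at_most_once A s ->
  [seq y <- s | y \in A] = [::] \/ exists y, [seq y <- s | y \in A] = [:: y].
Proof.
move=> uniq_s meet_As; have := filter_uniq (mem A) uniq_s.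
have mem_f y : y \in [seq y <- s | y \in A] -> (y \in A) && (y \in s) by rewrite mem_filter.
case: [seq y <- s | y \in A] mem_f => [|y [|z f]] mem_f; [by left | by right; exists y |].
have /andP[Ay sy] := mem_f y (mem_head _ _).
have /andP[Az sz] : (z \in A) && (z \in s) by rewrite mem_f // !in_cons eqxx orbT.
by rewrite /= (meet_As y z Ay Az sy sz) mem_head.
Qed.

Lemma restrict_left_comb t :
  uniq (leaves t) -> partial_transversal (map (@leaves Z) (left_hangs t)) A ->
  restrict A t =
    if [seq y <- leaves t | y \in A] is x :: p then Some (left_comb x p) else None.
Proof.
elim: t => [x|l IHl r _] /=; first by case: (x \in A).
rewrite cat_uniq => /and3P[uniq_l _ uniq_r] tA.
rewrite filter_cat IHl // => [|b bl]; last by apply: tA; rewrite in_cons bl orbT.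
have [fr0|[y fr1]] := filter_meets_at_most_once uniq_r (tA _ (mem_head _ _)).
  by rewrite fr0 (restrict_none fr0) cats0; case: [seq y <- leaves l | y \in A].
rewrite fr1 (restrict_leaf fr1); case: [seq y <- leaves l | y \in A] => [|x p] //=.
by rewrite cats1 left_comb_rcons.
Qed.

Lemma restrict_right_comb t :
  uniq (leaves t) -> partial_transversal (map (@leaves Z) (right_hangs t)) A ->
  restrict A t =
    if [seq y <- leaves t | y \in A] is x :: p then Some (right_comb x p) else None.
Proof.
elim: t => [x|l _ r IHr] /=; first by case: (x \in A).
rewrite cat_uniq => /and3P[uniq_l _ uniq_r] tA.
rewrite filter_cat IHr // => [|b br]; last by apply: tA; rewrite in_cons br orbT.
have [fl0|[y fl1]] := filter_meets_at_most_once uniq_l (tA _ (mem_head _ _)).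
  by rewrite fl0 (restrict_none fl0); case: [seq y <- leaves r | y \in A].
by rewrite fl1 (restrict_leaf fl1); case: [seq y <- leaves r | y \in A].
Qed.

Lemma restrict_caterpillars t1 t2 :
  uniq (leaves t1) -> leaves t1 = leaves t2 -> has (mem A) (leaves t1) ->
  partial_transversal (map (@leaves Z) (left_hangs t1)) A ->
  partial_transversal (map (@leaves Z) (right_hangs t2)) A ->
  exists c1 c2, [/\ restrict A t1 = Some c1, restrict A t2 = Some c2,
                    uiso c1 c2, caterpillar c1 & caterpillar c2].
Proof.
move=> uniq1 eq12 hasA tA1 tA2; have uniq2 : uniq (leaves t2) by rewrite -eq12.
rewrite (restrict_left_comb uniq1 tA1) (restrict_right_comb uniq2 tA2) -eq12.
case fA: [seq y <- leaves t1 | y \in A] hasA => [|x p]; first by rewrite has_filter fA.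
exists (left_comb x p), (right_comb x p); split => //.
- exact: uiso_left_right_comb.
- exact: caterpillar_left_comb.
- exact: caterpillar_right_comb.
Qed.

End Restriction.

Section LeafBlocks.
Variable Z : finType.
Implicit Types t : btree Z.

Lemma flatten_left_hangs t : flatten (rev (map (@leaves Z) (left_hangs t))) = leaves t.
Proof.
elim: t => [x|l IHl r _] //=.
by rewrite rev_cons -cats1 flatten_cat /= cats0 IHl.
Qed.

Lemma flatten_right_hangs t : flatten (map (@leaves Z) (right_hangs t)) = leaves t.
Proof. by elim: t => [x|l _ r IHr] //=; rewrite IHr. Qed.

Lemma nleaves_gt0 t : 0 < nleaves t.
Proof. by elim: t => [x|l IHl r _] //=; rewrite /nleaves size_cat ltn_addr. Qed.

Lemma card_Ztree t : is_Ztree t -> #|Z| = nleaves t.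
Proof.
case/andP=> uniq_t /forallP all_t; rewrite /nleaves -(card_uniqP uniq_t).
by apply: eq_card => z; rewrite all_t.
Qed.

End LeafBlocks.

Lemma mem_map_In (T : Type) (U : eqType) (f : T -> U) (s : seq T) u :
  u \in map f s -> exists2 x, List.In x s & u = f x.
Proof.
elim: s => [|x s IH] //=; rewrite in_cons => /predU1P[->|/IH[y ys ->]].
  by exists x; first left.
by exists y; first right.
Qed.

Lemma nat_size_bound (T : eqType) (S : seq (seq T)) (X : R) :
  Rlt 0 X -> (forall b, b \in S -> Rlt (INR (size b)) X) ->
  exists M, {in S, forall b, size b <= M} /\ Rlt (INR M) X.
Proof.
move=> X_gt0 S_lt; exists (\max_(b <- S) size b); split.
  by move=> b bS; apply: leq_bigmax_seq.
rewrite big_seq.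
by apply: (big_ind (fun m => Rlt (INR m) X)) => // i j; rewrite /maxn; case: ifP.
Qed.

Lemma log2_gt0 x : Rlt 1 x -> Rlt 0 (log2 x).
Proof.
by move=> x_gt1; apply: Rdiv_lt_0_compat; rewrite -ln_1; apply: ln_increasing; lra.
Qed.

Lemma le_INR_of_cover (N r M : nat) (L : R) :
  Rlt 0 L -> Rlt (INR M) (Rdiv (INR N) L) -> (N <= r * M)%N -> Rle L (INR r).
Proof.
move=> L_gt0 M_lt /leP/le_INR; rewrite mult_INR => N_le.
have ML_lt : Rlt (INR M * L) (INR N).
  rewrite -[INR N](_ : Rdiv (INR N) L * L = INR N)%R; last by field; lra.
  exact: Rmult_lt_compat_r.
have := pos_INR M; nra.
Qed.

Theorem lemma2 (n : nat) (Z : finType) (T1 T2 : btree Z) :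
  (2 <= n)%N ->
  is_Ztree T1 -> is_Ztree T2 ->
  leaves T1 = leaves T2 ->
  (forall Q, List.In Q (left_hangs T1) ->
     Rlt (INR (nleaves Q)) (Rdiv (INR #|Z|) (log2 (INR n)))) ->
  (forall Rt, List.In Rt (right_hangs T2) ->
     Rlt (INR (nleaves Rt)) (Rdiv (INR #|Z|) (log2 (INR n)))) ->
  exists A : {set Z},
    Rle (log2 (INR n)) (INR #|A|) /\
    exists t1 t2 : btree Z,
      [/\ restrict A T1 = Some t1, restrict A T2 = Some t2,
          uiso t1 t2, caterpillar t1 & caterpillar t2].
Proof.
move=> n_ge2 ZT1 _ eq12 hQ hR; have /andP[uniq1 _] := ZT1.
set L := log2 (INR n).
have L_gt0 : Rlt 0 L by apply/log2_gt0/lt_1_INR/ltP.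
set B := rev (map (@leaves Z) (left_hangs T1)).
set C := map (@leaves Z) (right_hangs T2).
have eB : flatten B = leaves T1 by exact: flatten_left_hangs.
have eC : flatten C = leaves T1 by rewrite flatten_right_hangs eq12.
have [M [szBC M_lt]] : exists M, {in B ++ C, forall b, size b <= M} /\
                                 Rlt (INR M) (Rdiv (INR (size (leaves T1))) L).
  apply: nat_size_bound => [|b]; rewrite -/(nleaves T1) -(card_Ztree ZT1).
    by apply: Rdiv_lt_0_compat; rewrite // (card_Ztree ZT1); apply/lt_0_INR/ltP/nleaves_gt0.
  by rewrite mem_cat mem_rev => /orP[] /mem_map_In[Q inQ ->]; [exact: hQ | exact: hR].
have szB : {in B, forall b, size b <= M} by move=> b bB; rewrite szBC // mem_cat bB.
have szC : {in C, forall c, size c <= M} by move=> c cC; rewrite szBC // mem_cat cC orbT.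
have [a [uniq_a sub_a tB tC cover]] := common_partial_transversal eB eC uniq1 szB szC.
have L_le : Rle L (INR (size a)) by apply: le_INR_of_cover L_gt0 M_lt cover.
exists [set y in a]; split; first by rewrite cardsE (card_uniqP uniq_a).
apply: restrict_caterpillars => //.
- case: a {uniq_a tB tC cover} sub_a L_le => [_ /= ?|z a sub_za _]; first lra.
  by apply/hasP; exists z; [exact: sub_za (mem_head _ _) | rewrite /= inE mem_head].
- by move=> b bB u v; rewrite !inE; apply: tB; rewrite mem_rev.
- by move=> c cC u v; rewrite !inE; apply: tC.
Qed.
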